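(* Let $\mathcal{D}$ be a clocked basic action theory and let $K\in\mathbb{N}$ be at least as large as every natural-number constant mentioned in $\mathcal{D}$. Then the relation $\approx_{\mathcal{D}K}$ on situations is a time-abstract bisimulation.
   Context: Situation calculus setting: sorts action, situation, object and time (the real numbers); $S_0$ initial situation; $\mathit{do}(a,s)$ the successor situation; $\phi[\sigma]$ is $\phi$ with $s$ replaced by $\sigma$; $\mathcal{S}$ denotes the set of ground situations. Fluents are relation or function symbols with last argument a situation and other arguments objects; there are finitely many fluents, finitely many action types and a finite set $\mathcal{O}$ of object constants (with unique names and domain closure). A formula is uniform in $s$ if it mentions no situation term other than $s$ and does not mention $\mathit{Poss}$. A basic action theory (BAT) is $\mathcal{D} = \mathcal{D}_0 \cup \mathcal{D}_{poss} \cup \mathcal{D}_{ssa} \cup \mathcal{D}_{ca} \cup \mathcal{D}_{co} \cup \Sigma$: initial description (uniform in $S_0$, complete information), precondition axioms, successor state axioms, domain closure and unique name axioms for actions and objects, and foundational axioms. A clock comparison is a formula $f(\vec x,s)\bowtie v$ or $v\bowtie v'$ with $f$ a functional fluent, $v,v'\in\mathbb{N}$, $\bowtie\in\{<,\leq,=,\geq,>\}$. A formula is clocked if every atomic subformula mentioning a term of sort time is a clock comparison; time-independent if it mentions no term of sort time. A BAT is clocked if there is a distinguished action type $\mathit{wait}(t)$ (other action types have no time argument) and: every functional fluent takes values of sort time; $\mathcal{D}_0$ sets every functional fluent to $0$ at $S_0$; every functional fluent $f$ has successor state axiom $f(\vec o,\mathit{do}(a,s))=y \equiv \exists t\,(a=\mathit{wait}(t)\wedge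 y=f(\vec o,s)+t) \vee (\neg\exists t\, a=\mathit{wait}(t)) \wedge (\phi_f(\vec o,a,s)\wedge y=0 \vee \neg\phi_f(\vec o,a,s)\wedge y=f(\vec o,s))$ with $\phi_f$ time-independent and uniform in $s$; relational fluents have successor state axioms $R(\vec o,\mathit{do}(a,s))\equiv\phi_R(\vec o,a,s)$ with $\phi_R$ clocked and uniform in $s$; precondition axioms have clocked right-hand sides uniform in $s$; $\mathit{Poss}(\mathit{wait}(t),s)\equiv\top$. Functional fluents are clocks; $\mathcal{C}$ is the set of ground situation-suppressed clock terms; $\nu_\sigma:\mathcal{C}\to\mathbb{R}_{\geq0}$ is given by $\nu_\sigma(\omega)=\tau$ iff $\mathcal{D}\models\omega[\sigma]=\tau$. Regions: for $u,v\in\mathbb{R}_{\geq0}$, $u\sim_K v$ iff either $u>K$ and $v>K$, or $u,v\leq K$ with $\lfloor u\rfloor=\lfloor v\rfloor$ and $\lceil u\rceil=\lceil v\rceil$; $\mathrm{fract}(v)=v-\lfloor v\rfloor$ if $v\leq K$ and $0$ otherwise. $\sigma_1\approx_{\mathcal{D}K}\sigma_2$ iff (1) for every relational fluent $R$ and ground object tuple $\vec\rho$, $\mathcal{D}\models R(\vec\rho,\sigma_1)$ iff $\mathcal{D}\models R(\vec\rho,\sigma_2)$; and (2) for every $\omega\in\mathcal{C}$, $\nu_{\sigma_1}(\omega)\sim_K\nu_{\sigma_2}(\omega)$, and for all $\omega,\omega'\in\mathcal{C}$, $\mathrm{fract}(\nu_{\sigma_1}(\omega))\leq\mathrm{fract}(\nu_{\sigma_1}(\omega'))$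 iff $\mathrm{fract}(\nu_{\sigma_2}(\omega))\leq\mathrm{fract}(\nu_{\sigma_2}(\omega'))$. An equivalence relation $R\subseteq\mathcal{S}\times\mathcal{S}$ is a time-abstract bisimulation if $(\sigma_1,\sigma_2)\in R$ implies: (1) for every clocked formula $\phi$ uniform in $s$ whose natural-number constants are $\leq K$, $\mathcal{D}\models\phi[\sigma_1]$ iff $\mathcal{D}\models\phi[\sigma_2]$; (2) for every action type $A\neq\mathit{wait}$ and ground argument tuple $\vec\rho$, $(\mathit{do}(A(\vec\rho),\sigma_1),\mathit{do}(A(\vec\rho),\sigma_2))\in R$; (3) for every $\tau_1\in\mathbb{R}_{\geq0}$ there is $\tau_2\in\mathbb{R}_{\geq0}$ with $(\mathit{do}(\mathit{wait}(\tau_1),\sigma_1),\mathit{do}(\mathit{wait}(\tau_2),\sigma_2))\in R$. *)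

From HB Require Import structures.
From mathcomp Require Import all_boot all_order all_algebra.
From mathcomp Require Import reals Rstruct.
From Stdlib Require Reals.

Set Implicit Arguments.
Unset Strict Implicit.
Unset Printing Implicit Defensive.

Import Order.TTheory GRing.Theory Num.Theory.

Definition time : realType := Rdefinitions.R.
Local Open Scope ring_scope.

(*  - Obj : the finite set O of object constants (unique names +       *)
(*          domain closure: the object domain is exactly Obj).         *)
(*  - CF  : functional fluents (= clocks), with object arity car;      *)
(*          their values are of sort time.                             *)
(*  - AT  : the action types other than wait, with object arity aar    *)
(*          (they have no time argument); wait(t) is built in.         *)
Record signature := Signature {
  Obj : finType;
  RF : finType; rar : RF -> nat;
  CF : finType; car : CF -> nat;
  AT : finType; aar : AT -> nat }.

Section Syntax.
Variable sg : signature.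

(* Ground actions: wait(t) for t of sort time, or A(o1,...,on).  By the
   domain-closure and unique-name axioms for actions, these are exactly
   the elements of the action domain. *)
Inductive gaction : Type :=
| GWait : time -> gaction
| GAct : forall A : AT sg, {ffun 'I_(aar A) -> Obj sg} -> gaction.

Inductive sit : Type :=
| S0 : sit
| Do : gaction -> sit -> sit.

(* Ground situations (the set S): all wait arguments are non-negative
   reals (so that clock values lie in R_{>=0}, cf. nu_sigma). *)
Fixpoint ground_sit (s : sit) : Prop :=
  match s with
  | S0 => True
  | Do (GWait t) s' => (0 <= t) /\ ground_sit s'
  | Do (GAct _ _) s' => ground_sit s'
  end.

Inductive cmp := CLt | CLe | CEq | CGe | CGt.

Definition cmpR (c : cmp) (x y : time) : Prop :=
  match c with
  | CLt => (x < y)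
  | CLe => (x <= y)
  | CEq => x = y
  | CGe => (x >= y)
  | CGt => (x > y)
  end.

(* Object terms with n free object variables (de Bruijn indices). *)
Inductive oterm (n : nat) : Type :=
| OVar : 'I_n -> oterm n
| OCst : Obj sg -> oterm n.

(* Action terms without time arguments (a term wait(t) would mention a
   term of sort time, which is not allowed in clocked/time-independent
   formulas outside clock comparisons). *)
Inductive aterm (n m : nat) : Type :=
| AVar : 'I_m -> aterm n m
| AApp : forall A : AT sg, ('I_(aar A) -> oterm n) -> aterm n m.

(* Clocked formulas uniform in s (the situation argument s is implicit;
   Poss is not available), with n free object variables and m free action
   variables.  The only atoms mentioning terms of sort time are clock
   comparisons f(x,s) ~ v and v ~ v' with v, v' natural numbers.
   Other connectives/quantifiers are definable. *)
Inductive form : nat -> nat -> Type :=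
| FTrue n m : form n m
| FNot n m : form n m -> form n m
| FAnd n m : form n m -> form n m -> form n m
| FExO n m : form n.+1 m -> form n m
| FExA n m : form n m.+1 -> form n m
| FEqO n m : oterm n -> oterm n -> form n m
| FEqA n m : aterm n m -> aterm n m -> form n m
| FRel n m (r : RF sg) : ('I_(rar r) -> oterm n) -> form n m
| FClk n m (f : CF sg) : ('I_(car f) -> oterm n) -> cmp -> nat -> form n m
| FNum n m : cmp -> nat -> nat -> form n m.

Fixpoint time_indep n m (phi : form n m) : bool :=
  match phi with
  | FTrue _ _ => true
  | FNot _ _ p => time_indep p
  | FAnd _ _ p q => time_indep p && time_indep q
  | FExO _ _ p => time_indep p
  | FExA _ _ p => time_indep p
  | FEqO _ _ _ _ => true
  | FEqA _ _ _ _ => true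
  | FRel _ _ _ _ => true
  | FClk _ _ _ _ _ _ => false
  | FNum _ _ _ _ _ => false
  end.

Fixpoint consts_le (K : nat) n m (phi : form n m) : bool :=
  match phi with
  | FTrue _ _ => true
  | FNot _ _ p => consts_le K p
  | FAnd _ _ p q => consts_le K p && consts_le K q
  | FExO _ _ p => consts_le K p
  | FExA _ _ p => consts_le K p
  | FEqO _ _ _ _ => true
  | FEqA _ _ _ _ => true
  | FRel _ _ _ _ => true
  | FClk _ _ _ _ _ v => (v <= K)%N
  | FNum _ _ _ v v' => (v <= K)%N && (v' <= K)%N
  end.

(* Interpretations of the fluents and of Poss over the standard domains
   (objects = Obj, actions = gaction, situations = sit, time = R). *)
Record model := Model {
  Rint : forall r : RF sg, {ffun 'I_(rar r) -> Obj sg} -> sit -> Prop;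
  Cint : forall f : CF sg, {ffun 'I_(car f) -> Obj sg} -> sit -> time;
  Pint : gaction -> sit -> Prop }.

Definition ext_env (T : Type) n (e : 'I_n -> T) (x : T) : 'I_n.+1 -> T :=
  fun i => match unlift ord0 i with Some j => e j | None => x end.

Definition eval_ot n (eo : 'I_n -> Obj sg) (t : oterm n) : Obj sg :=
  match t with OVar i => eo i | OCst o => o end.

Definition eval_at n m (eo : 'I_n -> Obj sg) (ea : 'I_m -> gaction)
  (t : aterm n m) : gaction :=
  match t with
  | AVar j => ea j
  | AApp A args => GAct [ffun i => eval_ot eo (args i)]
  end.

Fixpoint eval (M : model) (s : sit) n m (phi : form n m)
  : ('I_n -> Obj sg) -> ('I_m -> gaction) -> Prop :=
  match phi with
  | FTrue _ _ => fun _ _ => True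
  | FNot _ _ p => fun eo ea => ~ eval M s p eo ea
  | FAnd _ _ p q => fun eo ea => eval M s p eo ea /\ eval M s q eo ea
  | FExO _ _ p => fun eo ea => exists o, eval M s p (ext_env eo o) ea
  | FExA _ _ p => fun eo ea => exists a, eval M s p eo (ext_env ea a)
  | FEqO _ _ t t' => fun eo ea => eval_ot eo t = eval_ot eo t'
  | FEqA _ _ t t' => fun eo ea => eval_at eo ea t = eval_at eo ea t'
  | FRel _ _ r args => fun eo ea => Rint M [ffun i => eval_ot eo (args i)] s
  | FClk _ _ f args c v => fun eo ea =>
      cmpR c (Cint M [ffun i => eval_ot eo (args i)] s) (v%:R)
  | FNum _ _ c v v' => fun eo ea => cmpR c (v%:R) (v'%:R)
  end.

Definition env0 (T : Type) : 'I_0 -> T.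
Proof. by case. Defined.

Record BAT := MkBAT {
  (* D_0: complete initial description; relational fluents as given by
     init, every clock equal to 0 at S0 *)
  init : forall r : RF sg, {ffun 'I_(rar r) -> Obj sg} -> bool;
  (* D_poss: Poss(A(x),s) == pi_A(x,s), clocked, uniform in s *)
  poss : forall A : AT sg, form (aar A) 0;
  (* D_ssa for relational fluents: R(x,do(a,s)) == phi_R(x,a,s) *)
  ssaR : forall r : RF sg, form (rar r) 1;
  (* D_ssa for clocks: phi_f(x,a,s), time-independent *)
  ssaC : forall f : CF sg, form (car f) 1;
  ssaC_ti : forall f, time_indep (ssaC f) }.

Variable D : BAT.

(* M satisfies D_0, D_poss and D_ssa (the remaining axioms D_ca, D_co and
   Sigma are built into the choice of the standard domains). *)
Definition is_model (M : model) : Prop :=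
  (forall r (o : {ffun 'I_(rar r) -> Obj sg}), Rint M o S0 <-> init D o) /\
  (forall f o, Cint M (f := f) o S0 = 0) /\
  (forall A (o : {ffun 'I_(aar A) -> Obj sg}) s,
      Pint M (GAct o) s <-> eval M s (poss D A) (fun i => o i) (@env0 _)) /\
  (forall t s, Pint M (GWait t) s) /\
  (forall r (o : {ffun 'I_(rar r) -> Obj sg}) a s,
      Rint M o (Do a s) <-> eval M s (ssaR D r) (fun i => o i) (fun _ => a)) /\
  (forall f (o : {ffun 'I_(car f) -> Obj sg}) a s,
      (forall t, a = GWait t -> Cint M o (Do a s) = (Cint M o s + t)) /\
      ((forall t, a <> GWait t) ->
         (eval M s (ssaC D f) (fun i => o i) (fun _ => a) ->
            Cint M o (Do a s) = 0) /\
         (~ eval M s (ssaC D f) (fun i => o i) (fun _ => a) ->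
            Cint M o (Do a s) = Cint M o s))).

Definition entails (s : sit) (phi : form 0 0) : Prop :=
  forall M, is_model M -> eval M s phi (@env0 _) (@env0 _).

(* K bounds every natural-number constant mentioned in D (the constant 0
   of D_0 and of the clock axioms is trivially bounded). *)
Definition bat_consts_le (K : nat) : Prop :=
  (forall A, consts_le K (poss D A)) /\
  (forall r, consts_le K (ssaR D r)) /\
  (forall f, consts_le K (ssaC D f)).

(* Ground clock terms omega = f(rho), and nu_sigma(omega) = tau iff
   D |= omega[sigma] = tau. *)
Definition clock_term := {f : CF sg & {ffun 'I_(car f) -> Obj sg}}.

Definition nu (s : sit) (w : clock_term) (tau : time) : Prop :=
  forall M, is_model M -> Cint M (projT2 w) s = tau.

Definition simK (K : nat) (u v : time) : Prop :=
  ((u > K%:R) /\ (v > K%:R)) \/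
  ((u <= K%:R) /\ (v <= K%:R) /\
   Num.floor u = Num.floor v /\ Num.ceil u = Num.ceil v).

Definition fract (K : nat) (v : time) : time :=
  if (v <= K%:R) then (v - (Num.floor v)%:~R) else 0.

Definition approx (K : nat) (s1 s2 : sit) : Prop :=
  ground_sit s1 /\ ground_sit s2 /\
  (forall r (rho : {ffun 'I_(rar r) -> Obj sg}),
      entails s1 (@FRel 0 0 r (fun i => OCst 0 (rho i))) <->
      entails s2 (@FRel 0 0 r (fun i => OCst 0 (rho i)))) /\
  (forall w t1 t2, nu s1 w t1 -> nu s2 w t2 -> simK K t1 t2) /\
  (forall w w' t1 t1' t2 t2',
      nu s1 w t1 -> nu s1 w' t1' -> nu s2 w t2 -> nu s2 w' t2' ->
      ((fract K t1 <= fract K t1') <-> (fract K t2 <= fract K t2'))).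

Definition time_abstract_bisim (K : nat) (Rel : sit -> sit -> Prop) : Prop :=
  (forall s1 s2, Rel s1 s2 -> ground_sit s1 /\ ground_sit s2) /\
  (forall s, ground_sit s -> Rel s s) /\
  (forall s1 s2, Rel s1 s2 -> Rel s2 s1) /\
  (forall s1 s2 s3, Rel s1 s2 -> Rel s2 s3 -> Rel s1 s3) /\
  (forall s1 s2, Rel s1 s2 ->
     (forall phi : form 0 0, consts_le K phi ->
        (entails s1 phi <-> entails s2 phi)) /\
     (forall A (rho : {ffun 'I_(aar A) -> Obj sg}),
        Rel (Do (GAct rho) s1) (Do (GAct rho) s2)) /\
     (forall t1 : time, (0 <= t1) ->
        exists t2 : time, (0 <= t2) /\
          Rel (Do (GWait t1) s1) (Do (GWait t2) s2))).

End Syntax.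

From Pilot Require Import Defs.
From mathcomp Require Import all_boot all_order all_algebra.
From mathcomp Require Import reals Rstruct.
From mathcomp Require Import ring lra zify.
From Stdlib Require Import Classical ClassicalEpsilon.

Set Implicit Arguments.
Unset Strict Implicit.
Unset Printing Implicit Defensive.

Import Order.TTheory GRing.Theory Num.Theory Num.Def.
Local Open Scope ring_scope.

(** Every model of [D] gives the fluents the same values (complete initial
  description plus successor state axioms), so entailment is truth in one
  canonical model.  There, a clocked formula with constants at most [K]
  compares clocks only with integers at most [K] and mentions no time term,
  so it cannot separate two situations whose relational fluents agree and
  whose clocks lie on the same side of every such integer, even when its
  action variables are renamed by a bijection that fixes every non-wait
  action.  A non-wait action resets the same clocks on both sides.  Writing
  a delay as [t1 = n + (1 - e)] with [n] an integer and [0 < e <= 1],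
  waiting [t1] turns the circle of fractional parts so that [e] lands on [0];
  the fractional parts on the two sides are order-isomorphic, so [e] has a
  matching cut [e'] on the other side, and [t2 = n + (1 - e')] leads to the
  same region. *)

Lemma finite_separation (R : realFieldType) (C : finType) (L U : pred C)
    (g : C -> R) :
  (forall l u, L l -> U u -> g l < g u) ->
  exists e, (forall l, L l -> g l < e) /\ (forall u, U u -> e < g u).
Proof.
move=> gLU.
pose low := \big[Num.min/0]_c g c - 1; pose high := \big[Num.max/0]_c g c + 1.
pose lo := \big[Num.max/low]_(l | L l) g l; pose up := \big[Num.min/high]_(u | U u) g u.
have low_lt c : low < g c by rewrite /low; have := bigmin_le 0 c g; lra.
have lt_high c : g c < high by rewrite /high; have := le_bigmax 0 g c; lra.
have lo_lt_up : lo < up.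
  apply/bigmax_ltP; split=> [|l Ll]; apply/bigmin_gtP; split.
  - rewrite /low /high; have := bigmin_le_id (index_enum C) 0 predT g.
    by have := bigmax_ge_id (index_enum C) 0 predT g; lra.
  - by move=> u _; exact: low_lt.
  - exact: lt_high.
  - by move=> u Uu; exact: gLU.
exists ((lo + up) / 2); split=> [l Ll|u Uu].
- by have := le_bigmax_cond low g Ll; rewrite -/lo; lra.
- by have := bigmin_le_cond high g Uu; rewrite -/up; lra.
Qed.

Lemma order_iso_extend (R : realFieldType) (C : finType) (f g : C -> R) :
  (forall c c', f c <= f c' <-> g c <= g c') ->
  forall e, exists e', forall c, (f c < e <-> g c < e') /\ (f c = e <-> g c = e').
Proof.
move=> fg e.
have fg_lt c c' : f c < f c' <-> g c < g c'.
  by rewrite !ltNge; split=> /negP h; apply/negP => h'; apply/h/(fg c' c).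
have fg_eq c c' : f c = f c' <-> g c = g c'.
  split=> E; apply/eqP; rewrite eq_le; apply/andP;
    by split; [apply/(fg c c') | apply/(fg c' c)]; rewrite E.
case: (pickP (fun c => f c == e)) => [c0 /eqP <- | not_e].
  by exists (g c0) => c; split; [exact: fg_lt | exact: fg_eq].
have [e' [below above]] := finite_separation (L := fun c => f c < e)
  (U := fun c => e < f c) (g := g) (fun l u fl fu => proj1 (fg_lt l u) (lt_trans fl fu)).
exists e' => c; have := not_e c; rewrite /= => /negbT ne.
case: (ltgtP (f c) e) ne => // [fc _|fc _].
- by have := below c fc; split; split=> h; lra.
- by have := above c fc; split; split=> h; lra.
Qed.

Section Regions.
Variable K : nat.

Definition cut_equiv (u v : time) : Prop :=
  forall k : int, k%:~R <= K%:R :> time ->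
    (u < k%:~R <-> v < k%:~R) /\ (k%:~R < u <-> k%:~R < v).

Lemma cut_equiv_refl u : cut_equiv u u.
Proof. by move=> k _; split. Qed.

Lemma cut_equiv_sym u v : cut_equiv u v -> cut_equiv v u.
Proof. by move=> uv k /uv [? ?]; split; apply: iff_sym. Qed.

Lemma cut_equiv_trans u v w : cut_equiv u v -> cut_equiv v w -> cut_equiv u w.
Proof. by move=> uv vw k hk; have := uv k hk; have := vw k hk; lra. Qed.

Let natK : K%:R = (K%:Z)%:~R :> time.
Proof. by rewrite -pmulrn. Qed.

Lemma cut_equiv_gtK u v : cut_equiv u v -> (K%:R < u <-> K%:R < v).
Proof. by move=> /(_ K%:Z); rewrite -natK => /(_ (lexx _)) []. Qed.

Lemma cut_equiv_leK u v : cut_equiv u v -> (u <= K%:R <-> v <= K%:R).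
Proof.
by move/cut_equiv_gtK => uv; rewrite !leNgt; split=> /negP h; apply/negP => /uv.
Qed.

Lemma cut_equiv_floor u v : cut_equiv u v -> u <= K%:R -> floor u = floor v.
Proof.
move=> uv hu; have hv : v <= K%:R by apply/(cut_equiv_leK uv).
have floor_leK (w : time) : w <= K%:R -> (floor w)%:~R <= K%:R :> time.
  by move=> hw; apply: le_trans (floor_le _) hw.
apply/eqP; rewrite eq_le !floor_ge_int !leNgt.
apply/andP; split; apply/negP.
- by move/(proj1 (uv _ (floor_leK _ hu))); rewrite ltNge floor_le.
- by move/(proj1 (cut_equiv_sym uv (floor_leK _ hv))); rewrite ltNge floor_le.
Qed.

Lemma cut_equiv_ceil u v : cut_equiv u v -> u <= K%:R -> ceil u = ceil v.
Proof.
move=> uv hu; have hv : v <= K%:R by apply/(cut_equiv_leK uv).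
have ceil_leK (w : time) : w <= K%:R -> (ceil w)%:~R <= K%:R :> time.
  by move=> hw; rewrite natK ler_int ceil_le_int -natK.
apply/eqP; rewrite eq_le !ceil_le_int !leNgt.
apply/andP; split; apply/negP.
- by move/(proj2 (cut_equiv_sym uv (ceil_leK _ hv))); rewrite ltNge ceil_ge.
- by move/(proj2 (uv _ (ceil_leK _ hu))); rewrite ltNge ceil_ge.
Qed.

Lemma simK_cut_equiv u v : simK K u v <-> cut_equiv u v.
Proof.
split.
- case=> [[hu hv]|[hu [hv [hf hc]]]] k hk.
  + by split; split=> h; lra.
  + by rewrite -!floor_lt_int -!ceil_gt_int hf hc.
- move=> uv; case: (ltrP K%:R u) => hu.
  + by left; split=> //; apply/(cut_equiv_gtK uv).
  + right; split=> //; split; first exact/(cut_equiv_leK uv).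
    by split; [exact: cut_equiv_floor | exact: cut_equiv_ceil].
Qed.

Lemma fract_ge0 u : 0 <= fract K u.
Proof. by rewrite /fract; case: ifP => // _; have := floor_le u; lra. Qed.

Lemma fract_lt1 u : fract K u < 1.
Proof.
by rewrite /fract; case: ifP => // _; have := floorD1_gt u; rewrite intrD; lra.
Qed.

Lemma fract_leK u : u <= K%:R -> fract K u = u - (floor u)%:~R.
Proof. by rewrite /fract => ->. Qed.

Lemma fract_gtK u : K%:R < u -> fract K u = 0.
Proof. by rewrite /fract ltNge => /negbTE ->. Qed.

Lemma fract_eq0 u v : cut_equiv u v -> (fract K u = 0 <-> fract K v = 0).
Proof.
move=> uv; case: (ltrP K%:R u) => hu.
  by rewrite !fract_gtK //; apply/(cut_equiv_gtK uv).
have hv : v <= K%:R by apply/(cut_equiv_leK uv).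
rewrite !fract_leK // -(cut_equiv_floor uv hu).
have [_ floor_cut] := uv _ (le_trans (floor_le u) hu).
have := floor_le u; have := floor_le v; rewrite -(cut_equiv_floor uv hu).
by split=> h; lra.
Qed.

Lemma cut_equiv_offset (m : int) (p q : time) :
  0 <= p < 2 -> 0 <= q < 2 ->
  (p = 0 <-> q = 0) -> (p < 1 <-> q < 1) -> (p = 1 <-> q = 1) ->
  cut_equiv (m%:~R + p) (m%:~R + q).
Proof.
move=> /andP [p0 p2] /andP [q0 q2] pq0 pq1 pq1' k _.
have -> : k%:~R = m%:~R + (k - m)%:~R :> time by rewrite -intrD addrC subrK.
rewrite !ltrD2l; move: (k - m) => j.
have [j_le|[->|[->|j_ge]]] : (j <= -1 \/ j = 0 \/ j = 1 \/ 2 <= j)%R by lia.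
- have : j%:~R <= -1 :> time by rewrite -mulrN1z ler_int.
  by split; split=> h; lra.
- by rewrite mulr0z; split; split=> h; lra.
- by rewrite mulr1z; split; split=> h; lra.
- have : 2 <= j%:~R :> time by rewrite -[2 : time]/(2%:~R) ler_int.
  by split; split=> h; lra.
Qed.

Lemma fract_offset (m : int) (p : time) :
  0 <= p < 2 -> m%:~R + p <= K%:R ->
  fract K (m%:~R + p) = if p < 1 then p else p - 1.
Proof.
move=> /andP [p0 p2] hK; rewrite /fract hK; case: ltrP => hp.
- suff -> : floor (m%:~R + p) = m by lra.
  by apply: floor_def; rewrite intrD mulr1z; apply/andP; split; lra.
- suff -> : floor (m%:~R + p) = m + 1 by rewrite intrD mulr1z; lra.
  by apply: floor_def; rewrite !intrD mulr1z; apply/andP; split; lra.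
Qed.

Lemma cut_equiv_wait u v (n : int) (e e' : time) :
  cut_equiv u v -> 0 <= n -> 0 < e <= 1 -> 0 < e' <= 1 -> (e = 1 <-> e' = 1) ->
  (fract K u < e <-> fract K v < e') -> (fract K u = e <-> fract K v = e') ->
  cut_equiv (u + (n%:~R + (1 - e))) (v + (n%:~R + (1 - e'))).
Proof.
move=> uv n0 /andP [e0 e1] /andP [e0' e1'] ee' lt_e eq_e.
have n0' : 0 <= n%:~R :> time by rewrite ler0z.
case: (ltrP K%:R u) => hu.
  have hv : K%:R < v by apply/(cut_equiv_gtK uv).
  by move=> k hk; split; split=> h; lra.
have hv : v <= K%:R by apply/(cut_equiv_leK uv).
have fu := fract_leK hu; have fv := fract_leK hv.
have fu0 := fract_ge0 u; have fu1 := fract_lt1 u.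
have fv0 := fract_ge0 v; have fv1 := fract_lt1 v.
have zero := fract_eq0 uv.
have -> : u + (n%:~R + (1 - e)) = (floor u + n)%:~R + (fract K u + (1 - e)).
  by rewrite fu intrD; ring.
have -> : v + (n%:~R + (1 - e')) = (floor u + n)%:~R + (fract K v + (1 - e')).
  by rewrite fv (cut_equiv_floor uv hu) intrD; ring.
by apply: cut_equiv_offset; try (apply/andP; split); lra.
Qed.

(** The circle [0,1) turned so that [e] lands on [0]. *)
Definition rotate (e a : time) : time := if a < e then a + (1 - e) else a - e.

Lemma fract_wait u (n : int) (e : time) :
  0 <= n -> 0 < e <= 1 -> u + (n%:~R + (1 - e)) <= K%:R ->
  fract K (u + (n%:~R + (1 - e))) = rotate e (fract K u).
Proof.
move=> n0 /andP [e0 e1] hK.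
have n0' : 0 <= n%:~R :> time by rewrite ler0z.
have hu : u <= K%:R by lra.
have := fract_ge0 u; have := fract_lt1 u; rewrite fract_leK // => a1 a0.
have -> : u + (n%:~R + (1 - e)) = (floor u + n)%:~R + (u - (floor u)%:~R + (1 - e)).
  by rewrite intrD; ring.
rewrite fract_offset; last by rewrite intrD; lra.
  by rewrite /rotate; case: ltrP => ? /=; case: ltrP => ? /=; lra.
by apply/andP; split; lra.
Qed.

Lemma rotate_le (a b a' b' e e' : time) :
  0 <= a < 1 -> 0 <= b < 1 -> 0 <= a' < 1 -> 0 <= b' < 1 ->
  (a < e <-> a' < e') -> (b < e <-> b' < e') -> (a <= b <-> a' <= b') ->
  (rotate e a <= rotate e b <-> rotate e' a' <= rotate e' b').
Proof.
move=> /andP [? ?] /andP [? ?] /andP [? ?] /andP [? ?] ha hb hab.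
by rewrite /rotate; do 4 case: ltP => ?; lra.
Qed.

Definition region_equiv (C : Type) (x y : C -> time) : Prop :=
  (forall c, cut_equiv (x c) (y c)) /\
  (forall c c', fract K (x c) <= fract K (x c') <-> fract K (y c) <= fract K (y c')).

Lemma region_equiv_refl (C : Type) (x : C -> time) : region_equiv x x.
Proof. by split=> [c|c c']; [exact: cut_equiv_refl | exact: iff_refl]. Qed.

Lemma region_equiv_sym (C : Type) (x y : C -> time) :
  region_equiv x y -> region_equiv y x.
Proof.
by case=> xy fxy; split=> [c|c c']; [exact: cut_equiv_sym | exact: iff_sym].
Qed.

Lemma region_equiv_trans (C : Type) (x y z : C -> time) :
  region_equiv x y -> region_equiv y z -> region_equiv x z.
Proof.
case=> xy fxy [yz fyz]; split=> [c|c c'].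
- exact: cut_equiv_trans (xy c) (yz c).
- exact: iff_trans (fxy c c') (fyz c c').
Qed.

Lemma eq_region_equiv (C : Type) (x y x' y' : C -> time) :
  x =1 x' -> y =1 y' -> region_equiv x y -> region_equiv x' y'.
Proof. by move=> ex ey [xy fxy]; split=> [c|c c']; rewrite -!ex -!ey. Qed.

Lemma region_equiv_bounded (C : Type) (x y : C -> time) :
  (forall c, cut_equiv (x c) (y c)) ->
  (forall c c', x c <= K%:R -> x c' <= K%:R ->
     fract K (x c) <= fract K (x c') <-> fract K (y c) <= fract K (y c')) ->
  region_equiv x y.
Proof.
move=> xy bounded; split=> // c c'.
have := fract_ge0 (x c); have := fract_ge0 (y c); have := fract_eq0 (xy c).
have := fract_ge0 (x c'); have := fract_ge0 (y c').
case: (ltrP K%:R (x c')) => hc'.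
  rewrite (fract_gtK hc') (fract_gtK (proj1 (cut_equiv_gtK (xy c')) hc')) => *.
  by split=> ?; lra.
case: (ltrP K%:R (x c)) => hc; last by move=> *; exact: bounded.
rewrite (fract_gtK hc) (fract_gtK (proj1 (cut_equiv_gtK (xy c)) hc)) => *.
by split=> ?; lra.
Qed.

Lemma region_equiv_reset (C : Type) (x y x' y' : C -> time) :
  region_equiv x y ->
  (forall c, (x' c = 0 /\ y' c = 0) \/ (x' c = x c /\ y' c = y c)) ->
  region_equiv x' y'.
Proof.
move=> [xy fxy] reset.
have fract0 : fract K 0 = 0 by rewrite /fract ler0n floor0 subr0.
apply: region_equiv_bounded => [c|c c' _ _].
  by have [[-> ->]|[-> ->]] := reset c; [exact: cut_equiv_refl | exact: xy].
have := fract_ge0 (x c); have := fract_ge0 (y c); have := fract_eq0 (xy c).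
have := fract_ge0 (x c'); have := fract_ge0 (y c').
have [[-> ->]|[-> ->]] := reset c; have [[-> ->]|[-> ->]] := reset c';
  rewrite ?fract0 => *; [by [] | by split=> ?; lra | by split=> ?; lra | exact: fxy].
Qed.

Lemma region_cut_exists (C : finType) (x y : C -> time) (e : time) :
  region_equiv x y -> 0 < e <= 1 ->
  exists e', [/\ 0 < e' <= 1, (e = 1 <-> e' = 1) &
    forall c, (fract K (x c) < e <-> fract K (y c) < e') /\
              (fract K (x c) = e <-> fract K (y c) = e')].
Proof.
move=> [xy fxy] /andP [e0 e1].
(* Adjoining the points 0 and 1 forces [0 < e' <= 1] and [e = 1 <-> e' = 1]. *)
pose ext (z : C -> time) (i : C + bool) : time :=
  match i with inl c => fract K (z c) | inr b => if b then 1 else 0 end.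
have [|e' ext_cut] := order_iso_extend (f := ext x) (g := ext y) _ e.
  case=> [c|[]] [c'|[]] //=; do ?[by split=> ?; lra].
  - have := fract_lt1 (x c); have := fract_lt1 (y c); split=> ?; lra.
  - have := fract_ge0 (x c); have := fract_ge0 (y c); have := fract_eq0 (xy c).
    by split=> ?; lra.
  - have := fract_lt1 (x c'); have := fract_lt1 (y c'); split=> ?; lra.
  - have := fract_ge0 (x c'); have := fract_ge0 (y c'); split=> ?; lra.
exists e'; have /= [zero_lt _] := ext_cut (inr false).
have /= [one_lt one_eq] := ext_cut (inr true).
split=> [||c]; [apply/andP; split; lra | lra | exact: ext_cut (inl c)].
Qed.

Lemma region_equiv_wait (C : finType) (x y : C -> time) (t1 : time) :
  region_equiv x y -> 0 <= t1 ->
  exists2 t2, 0 <= t2 & region_equiv (fun c => x c + t1) (fun c => y c + t2).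
Proof.
move=> xy t1_ge0.
pose n := floor t1; pose e := 1 - (t1 - n%:~R).
have n_ge0 : 0 <= n by rewrite floor_ge0.
have e_bounds : 0 < e <= 1.
  have := floor_le t1; have := floorD1_gt t1; rewrite intrD => ? ?.
  by apply/andP; split; rewrite /e; lra.
have [e' [e'_bounds ee' cut_e]] := region_cut_exists xy e_bounds.
exists (n%:~R + (1 - e')).
  by move: e'_bounds n_ge0 => /andP [? ?]; rewrite -(ler0z time) => ?; lra.
have -> : t1 = n%:~R + (1 - e) by rewrite /e; ring.
have wait_cut c := cut_equiv_wait (xy.1 c) n_ge0 e_bounds e'_bounds ee'
  (cut_e c).1 (cut_e c).2.
have fract_bounds z : 0 <= fract K z < 1 by rewrite fract_ge0 fract_lt1.
apply: region_equiv_bounded => // c c' hc hc'.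
rewrite !fract_wait //; try exact/(cut_equiv_leK (wait_cut _)).
by apply: rotate_le => //; [exact: (cut_e c).1 | exact: (cut_e c').1 | exact: xy.2].
Qed.

End Regions.

Section Evaluation.
Variable sg : signature.

Lemma eval_fluent_ext (M M' : model sg) s s' :
  (forall r o, Defs.Rint M (r := r) o s <-> Defs.Rint M' o s') ->
  (forall f o, Cint M (f := f) o s = Cint M' o s') ->
  forall n m (phi : Defs.form sg n m) eo ea, eval M s phi eo ea <-> eval M' s' phi eo ea.
Proof.
move=> rel_eq clock_eq n m phi; elim: phi => //=.
- by move=> n0 m0 p IH eo ea; split=> h h'; apply/h/IH.
- by move=> n0 m0 p IHp q IHq eo ea; split=> -[/IHp ? /IHq ?].
- by move=> n0 m0 p IH eo ea; split=> -[o /IH h]; exists o.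
- by move=> n0 m0 p IH eo ea; split=> -[a /IH h]; exists a.
- by move=> n0 m0 f args c v eo ea; rewrite clock_eq.
Qed.

Lemma cmpR_cut_equiv K (u u' : time) c (v : nat) :
  cut_equiv K u u' -> (v <= K)%N -> cmpR c u v%:R <-> cmpR c u' v%:R.
Proof.
move=> /(_ v%:Z) uu' vK; have [? ?] : (u < v%:R <-> u' < v%:R) /\
    (v%:R < u <-> v%:R < u') by apply: uu'; rewrite -!pmulrn ler_nat.
by case: c => /=; split=> ?; lra.
Qed.

Lemma eval_cut_equiv K (M M' : model sg) s s' (pi : gaction sg -> gaction sg) :
  (forall r o, Defs.Rint M (r := r) o s <-> Defs.Rint M' o s') ->
  (forall f o, cut_equiv K (Cint M (f := f) o s) (Cint M' o s')) ->
  bijective pi -> (forall A (o : {ffun 'I_(aar A) -> Obj sg}), pi (GAct o) = GAct o) ->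
  forall n m (phi : Defs.form sg n m), consts_le K phi ->
  forall eo ea ea', (forall j, ea' j = pi (ea j)) ->
  eval M s phi eo ea <-> eval M' s' phi eo ea'.
Proof.
move=> rel_eq clock_cut [pi' piK pi'K] pi_act n m phi; elim: phi => /=.
- by [].
- by move=> n0 m0 p IH hK eo ea ea' /(IH hK eo) E; split=> h h'; apply/h/E.
- move=> n0 m0 p IHp q IHq /andP [hp hq] eo ea ea' ea'E.
  by rewrite (IHp hp eo ea ea' ea'E) (IHq hq eo ea ea' ea'E).
- by move=> n0 m0 p IH hK eo ea ea' /(IH hK) E; split=> -[o /E h]; exists o.
- move=> n0 m0 p IH hK eo ea ea' ea'E.
  have ext_pi a j : ext_env ea' (pi a) j = pi (ext_env ea a j).
    by rewrite /ext_env; case: (unlift ord0 j).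
  split=> -[a].
  + by move/(IH hK eo _ _ (ext_pi a)) => h; exists (pi a).
  + by rewrite -[a]pi'K => /(IH hK eo _ _ (ext_pi _)) h; exists (pi' a).
- by [].
- move=> n0 m0 t t' _ eo ea ea' ea'E.
  have pi_eval u : eval_at eo ea' u = pi (eval_at eo ea u).
    by case: u => [j|A args] /=; rewrite ?pi_act.
  by rewrite !pi_eval; split=> [->|/(can_inj piK)].
- by move=> n0 m0 r args _ eo ea ea' _; exact: rel_eq.
- by move=> n0 m0 f args c v vK eo ea ea' _; exact: cmpR_cut_equiv.
- by [].
Qed.

Definition swap_wait (t1 t2 : time) (a : gaction sg) : gaction sg :=
  match a with
  | GWait t => GWait sg (if t == t1 then t2 else if t == t2 then t1 else t)
  | GAct _ o => GAct o
  end.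

Lemma swap_waitK t1 t2 : involutive (swap_wait t1 t2).
Proof.
case=> [t|A o] //=; congr GWait.
have [->|nt1] := eqVneq t t1; first by rewrite eqxx; case: eqVneq.
have [->|nt2] := eqVneq t t2; first by rewrite eqxx.
by rewrite (negbTE nt1) (negbTE nt2).
Qed.

End Evaluation.

Section CanonicalModel.
Variables (sg : signature) (D : BAT sg).

Record fluent_state := FluentState {
  rel_of : forall r : RF sg, {ffun 'I_(rar r) -> Obj sg} -> Prop;
  clock_of : forall f : CF sg, {ffun 'I_(car f) -> Obj sg} -> time }.

Definition state_model (st : fluent_state) : model sg :=
  Model (fun r o _ => rel_of st o) (fun f o _ => clock_of st o) (fun _ _ => True).

Fixpoint canonical_state (s : sit sg) : fluent_state :=
  match s with
  | S0 => FluentState (fun r o => init D o) (fun _ _ => 0)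
  | Do a s' =>
    let M := state_model (canonical_state s') in
    FluentState
      (fun r o => eval M s' (ssaR D r) (fun i => o i) (fun _ => a))
      (fun f o => match a with
         | GWait t => clock_of (canonical_state s') o + t
         | GAct _ _ =>
           if excluded_middle_informative
                (eval M s' (ssaC D f) (fun i => o i) (fun _ => a))
           then 0 else clock_of (canonical_state s') o
         end)
  end.

Definition canonical_model : model sg :=
  Model (fun r o s => rel_of (canonical_state s) o)
    (fun f o s => clock_of (canonical_state s) o)
    (fun a s => match a with
       | GWait _ => True
       | GAct A o => eval (state_model (canonical_state s)) s (poss D A)
                       (fun i => o i) (@env0 _)
       end).

Lemma eval_canonical_state s n m (phi : Defs.form sg n m) eo ea :
  eval (state_model (canonical_state s)) s phi eo ea <->
  eval canonical_model s phi eo ea.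
Proof. exact: eval_fluent_ext. Qed.

Lemma canonical_model_is_model : is_model D canonical_model.
Proof.
do 2 (split; first by []).
split; first by move=> A o s; exact: eval_canonical_state.
split; first by [].
split; first by move=> r o a s; exact: eval_canonical_state.
move=> f o a s; split=> [t -> //|].
case: a => [t /(_ t) //|A rho _] /=.
case: excluded_middle_informative => cond; split=> // cond'; exfalso.
- exact/cond'/eval_canonical_state.
- exact/cond/eval_canonical_state.
Qed.

Lemma models_agree (M M' : model sg) : is_model D M -> is_model D M' ->
  forall s, (forall r o, Defs.Rint M (r := r) o s <-> Defs.Rint M' o s) /\
            (forall f o, Cint M (f := f) o s = Cint M' o s).
Proof.
move=> [init_rel [init_clock [_ [_ [ssa_rel ssa_clock]]]]].
move=> [init_rel' [init_clock' [_ [_ [ssa_rel' ssa_clock']]]]].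
elim=> [|a s [rel_eq clock_eq]].
  by split=> [r o|f o]; rewrite ?init_rel ?init_rel' ?init_clock ?init_clock'.
have E := eval_fluent_ext rel_eq clock_eq.
split=> [r o|f o]; first by rewrite ssa_rel ssa_rel' E.
have [wait act] := ssa_clock f o a s; have [wait' act'] := ssa_clock' f o a s.
case: a wait act wait' act' => [t wait _ wait' _|A rho _ act _ act'].
  by rewrite (wait t) // (wait' t) // clock_eq.
have not_wait t : GAct rho <> GWait sg t by [].
have [reset keep] := act not_wait; have [reset' keep'] := act' not_wait.
case: (classic (eval M s (ssaC D f) (fun i => o i) (fun _ => GAct rho))) => cond.
- by rewrite reset // reset' //; apply/E.
- by rewrite keep // keep' ?clock_eq // => /E.
Qed.

Lemma entails_model (M : model sg) s (phi : Defs.form sg 0 0) : is_model D M ->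
  entails D s phi <-> eval M s phi (@env0 _) (@env0 _).
Proof.
move=> HM; split=> [/(_ M HM) //|h M' HM'].
have [rel_eq clock_eq] := models_agree HM HM' s.
exact/(eval_fluent_ext rel_eq clock_eq).
Qed.

Lemma nu_model (M : model sg) s w t : is_model D M ->
  nu D s w t <-> Cint M (projT2 w) s = t.
Proof.
move=> HM; split=> [/(_ M HM) //|<- M' HM'].
by have [_ ->] := models_agree HM' HM s.
Qed.

End CanonicalModel.

Section Bisimulation.
Variables (sg : signature) (D : BAT sg) (K : nat) (M : model sg).
Hypothesis HM : is_model D M.

Definition clocks_at (s : sit sg) (w : clock_term sg) : time := Cint M (projT2 w) s.

Definition fluent_region (s1 s2 : sit sg) : Prop :=
  [/\ ground_sit s1, ground_sit s2,
      forall r o, Defs.Rint M (r := r) o s1 <-> Defs.Rint M o s2 &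
      region_equiv K (clocks_at s1) (clocks_at s2)].

Lemma approx_fluent_region s1 s2 : approx D K s1 s2 <-> fluent_region s1 s2.
Proof.
have rel_entails s r (o : {ffun 'I_(rar r) -> Obj sg}) :
    entails D s (@FRel sg 0 0 r (fun i => OCst 0 (o i))) <-> Defs.Rint M o s.
  rewrite (entails_model _ _ HM) /=.
  by have -> : [ffun i => o i] = o by apply/ffunP => i; rewrite ffunE.
have nuE s w t := nu_model s w t HM.
split=> [[g1 [g2 [rel_eq [cut fract_le]]]]|[g1 g2 rel_eq [cut fract_le]]].
- split=> // [r o|]; first by rewrite -!rel_entails.
  split=> [w|w w']; last by apply: fract_le; apply/nuE.
  by apply/simK_cut_equiv/cut; apply/nuE.
- do 2 split=> //; split=> [r o|]; first by rewrite !rel_entails.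
  split=> [w t1 t2 /nuE <- /nuE <-|w w' t1 t1' t2 t2' /nuE <- /nuE <- /nuE <- /nuE <-].
  + exact/simK_cut_equiv/cut.
  + exact: fract_le.
Qed.

Lemma fluent_region_refl s : ground_sit s -> fluent_region s s.
Proof. by move=> gs; split=> //; exact: region_equiv_refl. Qed.

Lemma fluent_region_sym s1 s2 : fluent_region s1 s2 -> fluent_region s2 s1.
Proof.
case=> g1 g2 rel_eq clocks; split=> // [r o|]; first exact: iff_sym.
exact: region_equiv_sym.
Qed.

Lemma fluent_region_trans s1 s2 s3 :
  fluent_region s1 s2 -> fluent_region s2 s3 -> fluent_region s1 s3.
Proof.
case=> g1 _ rel12 clocks12 [_ g3 rel23 clocks23]; split=> // [r o|].
- exact: iff_trans (rel12 r o) (rel23 r o).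
- exact: region_equiv_trans clocks12 clocks23.
Qed.

Lemma fluent_region_eval s1 s2 (pi : gaction sg -> gaction sg) :
  fluent_region s1 s2 -> bijective pi ->
  (forall A (o : {ffun 'I_(aar A) -> Obj sg}), pi (GAct o) = GAct o) ->
  forall n m (phi : Defs.form sg n m), consts_le K phi ->
  forall eo ea ea', (forall j, ea' j = pi (ea j)) ->
  eval M s1 phi eo ea <-> eval M s2 phi eo ea'.
Proof.
case=> _ _ rel_eq [cut _]; apply: eval_cut_equiv => // f o.
exact: (cut (existT _ f o)).
Qed.

Hypothesis HK : bat_consts_le D K.

Lemma fluent_region_act s1 s2 A (rho : {ffun 'I_(aar A) -> Obj sg}) :
  fluent_region s1 s2 -> fluent_region (Do (GAct rho) s1) (Do (GAct rho) s2).
Proof.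
move=> region; have [g1 g2 _ clocks] := region.
have [_ [_ [_ [_ [ssa_rel ssa_clock]]]]] := HM; have [_ [HKr HKc]] := HK.
have same_eval n (phi : Defs.form sg n 1) eo : consts_le K phi ->
    eval M s1 phi eo (fun _ => GAct rho) <-> eval M s2 phi eo (fun _ => GAct rho).
  by move=> hK; apply: (fluent_region_eval (pi := id) region) => //; exact: inv_bij.
split=> // [r o|]; first by rewrite !ssa_rel; exact: same_eval.
apply: region_equiv_reset clocks _ => -[f o]; rewrite /clocks_at /=.
have not_wait t : GAct rho <> GWait sg t by [].
have [_ /(_ not_wait) [reset1 keep1]] := ssa_clock f o (GAct rho) s1.
have [_ /(_ not_wait) [reset2 keep2]] := ssa_clock f o (GAct rho) s2.
have cond_iff := same_eval _ (ssaC D f) (fun i => o i) (HKc f).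
case: (classic (eval M s1 (ssaC D f) (fun i => o i) (fun _ => GAct rho))) => cond.
- by left; split; [exact: reset1 | apply/reset2/cond_iff].
- by right; split; [exact: keep1 | apply: keep2 => /cond_iff].
Qed.

Lemma fluent_region_wait s1 s2 t1 : fluent_region s1 s2 -> 0 <= t1 ->
  exists2 t2, 0 <= t2 & fluent_region (Do (GWait sg t1) s1) (Do (GWait sg t2) s2).
Proof.
move=> region t1_ge0; have [g1 g2 _ clocks] := region.
have [_ [_ [_ [_ [ssa_rel ssa_clock]]]]] := HM; have [_ [HKr _]] := HK.
have [t2 t2_ge0 clocks'] := region_equiv_wait clocks t1_ge0.
exists t2 => //; split=> //= [r o|].
- (* Formulas mention no time term, so swapping [wait t1] and [wait t2] is invisible. *)
  rewrite !ssa_rel; apply: (fluent_region_eval (pi := swap_wait t1 t2) region) => //.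
  + exact/inv_bij/swap_waitK.
  + by move=> _ /=; rewrite eqxx.
- apply: eq_region_equiv clocks' => -[f o]; rewrite /clocks_at /=.
    by have [/(_ t1 erefl) -> _] := ssa_clock f o (GWait sg t1) s1.
  by have [/(_ t2 erefl) -> _] := ssa_clock f o (GWait sg t2) s2.
Qed.

Lemma fluent_region_bisim : time_abstract_bisim D K fluent_region.
Proof.
split; first by move=> s1 s2 [].
split; first exact: fluent_region_refl.
split; first exact: fluent_region_sym.
split; first exact: fluent_region_trans.
move=> s1 s2 region; split; last split.
- move=> phi hK; rewrite !(entails_model _ _ HM).
  by apply: (fluent_region_eval (pi := id) region) => //; exact: inv_bij.
- by move=> A rho; exact: fluent_region_act.
- by move=> t1 /(fluent_region_wait region) [t2]; exists t2.
Qed.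

End Bisimulation.

Lemma time_abstract_bisim_ext sg (D : BAT sg) K (Rel Rel' : sit sg -> sit sg -> Prop) :
  (forall s1 s2, Rel s1 s2 <-> Rel' s1 s2) ->
  time_abstract_bisim D K Rel -> time_abstract_bisim D K Rel'.
Proof.
move=> E [ground [refl [sym [trans step]]]].
split; first by move=> s1 s2 /E /ground.
split; first by move=> s /refl /E.
split; first by move=> s1 s2 /E /sym /E.
split; first by move=> s1 s2 s3 /E h12 /E /(trans _ _ _ h12) /E.
move=> s1 s2 /E /step [same [act wait]]; split=> //.
split=> [A rho|t1 /wait [t2 [? ?]]]; first exact/E/act.
by exists t2; split=> //; apply/E.
Qed.

Theorem theorem6 (sg : signature) (D : BAT sg) (K : nat) :
  bat_consts_le D K -> time_abstract_bisim D K (approx D K).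
Proof.
move=> HK; have HM := canonical_model_is_model D.
apply: time_abstract_bisim_ext (fluent_region_bisim HM HK) => s1 s2.
exact: iff_sym (approx_fluent_region K HM s1 s2).
Qed.
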